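(* Let $(F,v)$ be a valued field. Every nonsingular quadratic space $(V,q)$ over $F$ admits a $v$-norm which is compatible with $q$ of some depth $\varepsilon\in\frac12\Gamma_F$ with $0\le\varepsilon\le v(2)$. Moreover, every hyperbolic quadratic space over $F$ admits a tame (i.e. depth $0$) compatible $v$-norm.
   Context: $F$ is a field with valuation $v\colon F\to\Gamma\cup\{\infty\}$, $\Gamma$ divisible totally ordered abelian group, $\Gamma_F=v(F^\times)$, $\frac12\Gamma_F=\{\gamma\in\Gamma:2\gamma\in\Gamma_F\}$; $v(2)=\infty$ iff $\operatorname{char}F=2$. A quadratic form is nonsingular if its polar form $b_q(x,y)=q(x+y)-q(x)-q(y)$ is nondegenerate. A $v$-norm on a finite-dimensional $F$-space $V$ is a map $\alpha\colon V\to\Gamma\cup\{\infty\}$ with $\alpha(x)=\infty\iff x=0$, $\alpha(\lambda x)=v(\lambda)+\alpha(x)$, $\alpha(x+y)\ge\min(\alpha(x),\alpha(y))$, admitting a basis $(e_i)$ with $\alpha(\sum\lambda_ie_i)=\min_i\alpha(\lambda_ie_i)$. For $\varepsilon\in\Gamma$, $\varepsilon\ge0$, $\alpha$ is compatible of depth $\varepsilon$ with $q$ if (a) $v(b_q(x,y))\ge\alpha(x)+\alpha(y)+\varepsilon$ for all $x,y$; (b) $v(q(x))\ge2\alpha(x)$ for all $x$; (c) for every $x\neq0$ there exists $y\neq0$ with $v(b_q(x,y))=\alpha(x)+\alpha(y)+\varepsilon$. Tame means depth $0$. *)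

From HB Require Import structures.
From mathcomp Require Import all_boot all_order all_algebra.
Set Implicit Arguments. Unset Strict Implicit. Unset Printing Implicit Defensive.
Import Order.TTheory GRing.Theory Num.Theory.
Local Open Scope ring_scope.

Definition divisible_ordered_group (G : porderZmodType) : Prop :=
  [/\ (forall a b : G, (a <= b) || (b <= a)),
      (forall a b c : G, a <= b -> a + c <= b + c) &
      (forall (n : nat) (g : G), (0 < n)%N -> exists h : G, h *+ n = g)].

(* Gamma \cup {oo} is represented by option G, with None = oo. *)
Definition vle (G : porderZmodType) (a b : option G) : bool :=
  match a, b with
  | _, None => true
  | None, Some _ => false
  | Some x, Some y => x <= y
  end.

Definition vadd (G : porderZmodType) (a b : option G) : option G :=
  match a, b with
  | Some x, Some y => Some (x + y)
  | _, _ => None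
  end.

Definition vmin (G : porderZmodType) (a b : option G) : option G :=
  if vle a b then a else b.

Definition valuation (F : fieldType) (G : porderZmodType) (v : F -> option G) : Prop :=
  [/\ (forall x, v x = None <-> x = 0),
      (forall x y, v (x * y) = vadd (v x) (v y)) &
      (forall x y, vle (vmin (v x) (v y)) (v (x + y)))].

Definition in_half_value_group (F : fieldType) (G : porderZmodType)
  (v : F -> option G) (eps : G) : Prop :=
  exists x : F, x != 0 /\ v x = Some (eps + eps).

Definition polar (F : fieldType) (V : vectType F) (q : V -> F) (x y : V) : F :=
  q (x + y) - q x - q y.

Definition quadratic_form (F : fieldType) (V : vectType F) (q : V -> F) : Prop :=
  [/\ (forall (a : F) (x : V), q (a *: x) = a ^+ 2 * q x),
      (forall x y z : V, polar q (x + y) z = polar q x z + polar q y z) &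
      (forall (a : F) (x y : V), polar q (a *: x) y = a * polar q x y)].

Definition nonsingular (F : fieldType) (V : vectType F) (q : V -> F) : Prop :=
  forall x : V, (forall y : V, polar q x y = 0) -> x = 0.

(* hyperbolic quadratic space: orthogonal sum of hyperbolic planes, i.e.
   V has a basis e_1..e_n, f_1..f_n with q(sum a_i e_i + b_i f_i) = sum a_i b_i *)
Definition hyperbolic (F : fieldType) (V : vectType F) (q : V -> F) : Prop :=
  exists (n : nat) (e f : n.-tuple V),
    basis_of fullv (tval e ++ tval f) /\
    forall a b : 'I_n -> F,
      q (\sum_(i < n) (a i *: tnth e i + b i *: tnth f i)) = \sum_(i < n) a i * b i.

Definition vnorm (F : fieldType) (G : porderZmodType) (v : F -> option G)
  (V : vectType F) (alpha : V -> option G) : Prop :=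
  [/\ (forall x, alpha x = None <-> x = 0),
      (forall (l : F) (x : V), alpha (l *: x) = vadd (v l) (alpha x)),
      (forall x y, vle (vmin (alpha x) (alpha y)) (alpha (x + y))) &
      (exists e : seq V, basis_of fullv e /\
         forall l : 'I_(size e) -> F,
           alpha (\sum_(i < size e) l i *: e`_i)
           = foldr (@vmin G) None [seq alpha (l i *: e`_i) | i <- enum 'I_(size e)])].

Definition compatible (F : fieldType) (G : porderZmodType) (v : F -> option G)
  (V : vectType F) (q : V -> F) (alpha : V -> option G) (eps : G) : Prop :=
  [/\ (forall x y : V, vle (vadd (vadd (alpha x) (alpha y)) (Some eps)) (v (polar q x y))),
      (forall x : V, vle (vadd (alpha x) (alpha x)) (v (q x))) &
      (forall x : V, x != 0 -> exists y : V, y != 0 /\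
          v (polar q x y) = vadd (vadd (alpha x) (alpha y)) (Some eps))].

(* A nonsingular quadratic space is an orthogonal sum of anisotropic lines <z>
   (b(z, z) = 2 q(z) <> 0) and of planes spanned by x, y with b(x, y) = 1 and
   b(x, x) = b(y, y) = 0.  For a basis e with weights s, the diagonal norm
   alpha(sum_i c_i e_i) = min_i (v(c_i) + s(e_i)) is compatible of depth eps with q
   as soon as v(b(e_i, e_j)) >= s(e_i) + s(e_j) + eps, v(q(e_i)) >= 2 s(e_i), and
   every e_i has a partner e_j, orthogonal to all other basis vectors, for which the
   first bound is an equality.  A line admits such weights exactly for eps >= v(2).
   A plane admits them once 2 eps >= -(v(q(x)) + v(q(y))), which is a positive
   constraint only in characteristic 2, where v(2) is infinite (otherwise
   q(x) = b(x, x) / 2 = 0).  Weights of orthogonal blocks glue at the largest of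
   their depths.  A hyperbolic basis with zero weights works with eps = 0. *)

From HB Require Import structures.
From Stdlib Require Import Classical.
From mathcomp Require Import all_boot all_order all_algebra ring.
Import Order.TTheory GRing.Theory Num.Theory.
Local Open Scope ring_scope.
Set Implicit Arguments.
Unset Strict Implicit.

Section OrderedGroup.
Variable G : porderZmodType.
Hypothesis le_total : forall a b : G, (a <= b) || (b <= a).
Hypothesis lerD2r : forall a b c : G, a <= b -> a + c <= b + c.

Lemma lerD2l (a b c : G) : a <= b -> c + a <= c + b.
Proof. by rewrite ![c + _]addrC; apply: lerD2r. Qed.

Lemma lerD2 (a b c d : G) : a <= b -> c <= d -> a + c <= b + d.
Proof. by move=> ab cd; apply: le_trans (lerD2r c ab) (lerD2l b cd). Qed.

Lemma lerD2rE (a b c : G) : (a + c <= b + c) = (a <= b).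
Proof. by apply/idP/idP => [/(lerD2r (- c))|]; rewrite ?addrK //; apply: lerD2r. Qed.

Lemma double_ge0 (h : G) : 0 <= h + h -> 0 <= h.
Proof.
move=> h2; case/orP: (le_total 0 h) => // h_le0.
by apply: le_trans h2 _; have := lerD2r h h_le0; rewrite add0r.
Qed.

Lemma double_eq0 (h : G) : h + h = 0 -> h = 0.
Proof.
move=> h2; apply/le_anti; case/orP: (le_total 0 h) => h0;
  by have := lerD2r h h0; rewrite add0r h2 => ->; rewrite h0.
Qed.

Hypothesis divisible : forall (n : nat) (g : G), (0 < n)%N -> exists h : G, h *+ n = g.

Lemma halve (g : G) : exists h : G, h + h = g.
Proof. by have [h <-] := divisible g (isT : 0 < 2)%N; exists h; rewrite mulr2n. Qed.

Lemma split_depth (a b eps : G) : 0 <= a + b + eps + eps ->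
  exists s1 s2 : G, [/\ s1 + s2 + eps = 0, s1 + s1 <= a & s2 + s2 <= b].
Proof.
move=> abe; have [k kk] := halve a; exists k, (- eps - k); split.
- by rewrite addrCA subrr addr0 addNr.
- by rewrite kk.
rewrite -(lerD2rE _ _ (a + eps + eps)) -kk.
have -> : - eps - k + (- eps - k) + (k + k + eps + eps) = 0.
  have E : eps + k + (eps + k) = k + k + eps + eps by rewrite addrACA addrC addrA.
  by rewrite -!opprD -E addNr.
by rewrite kk !addrA [b + a]addrC.
Qed.

Lemma vle_refl (a : option G) : vle a a.
Proof. by case: a => //= x; exact: lexx. Qed.

Lemma vle_trans (a b c : option G) : vle a b -> vle b c -> vle a c.
Proof. by case: a b c => [x|] [y|] [z|] //=; apply: le_trans. Qed.

Lemma vle_total (a b : option G) : vle a b || vle b a.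
Proof. by case: a b => [x|] [y|] //=. Qed.

Lemma vle_anti (a b : option G) : vle a b -> vle b a -> a = b.
Proof. by case: a b => [x|] [y|] //= h1 h2; congr Some; apply/le_anti; rewrite h1. Qed.

Lemma vleNone (a : option G) : vle a None.
Proof. by case: a. Qed.

Lemma vNone_le (a : option G) : vle None a -> a = None.
Proof. by case: a. Qed.

Lemma vminl (a b : option G) : vle (vmin a b) a.
Proof.
rewrite /vmin; case: ifP => [_|/negbT h]; first exact: vle_refl.
by have := vle_total a b; rewrite (negbTE h).
Qed.

Lemma vminr (a b : option G) : vle (vmin a b) b.
Proof. by rewrite /vmin; case: ifP => // _; exact: vle_refl. Qed.

Lemma vle_min (c a b : option G) : vle c a -> vle c b -> vle c (vmin a b).
Proof. by rewrite /vmin; case: ifP. Qed.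

Lemma vmin_le2 (a b a' b' : option G) :
  vle a a' -> vle b b' -> vle (vmin a b) (vmin a' b').
Proof.
move=> aa bb; apply: vle_min.
  exact: vle_trans (vminl a b) aa.
exact: vle_trans (vminr a b) bb.
Qed.

Lemma vaddC (a b : option G) : vadd a b = vadd b a.
Proof. by case: a b => [x|] [y|] //=; rewrite addrC. Qed.

Lemma vaddA (a b c : option G) : vadd a (vadd b c) = vadd (vadd a b) c.
Proof. by case: a b c => [x|] [y|] [z|] //=; rewrite addrA. Qed.

Lemma vaddACA (a b c d : option G) : vadd (vadd a b) (vadd c d) = vadd (vadd a c) (vadd b d).
Proof. by case: a b c d => [x|] [y|] [z|] [t|] //=; rewrite addrACA. Qed.

Lemma vadd0 (a : option G) : vadd (Some 0) a = a.
Proof. by case: a => //= x; rewrite add0r. Qed.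

Lemma vaddNone (a : option G) : vadd a None = None.
Proof. by case: a. Qed.

Lemma vle_add2r (c a b : option G) : vle a b -> vle (vadd a c) (vadd b c).
Proof. by case: a b c => [x|] [y|] [z|] //=; apply: lerD2r. Qed.

Lemma vle_add2 (a b c d : option G) :
  vle a b -> vle c d -> vle (vadd a c) (vadd b d).
Proof.
move=> ab cd; apply: vle_trans (vle_add2r c ab) _.
by rewrite ![vadd b _]vaddC; apply: vle_add2r.
Qed.

Lemma vle_add2rE (a b : option G) (g : G) :
  vle (vadd a (Some g)) (vadd b (Some g)) = vle a b.
Proof. by case: a b => [x|] [y|] //=; rewrite lerD2rE. Qed.

Lemma vadd_minl (a b c : option G) : vadd (vmin a b) c = vmin (vadd a c) (vadd b c).
Proof.
case: c => [g|]; last by rewrite !vaddNone.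
by rewrite /vmin vle_add2rE; case: ifP.
Qed.

Lemma vle_addr (a : option G) (g : G) : 0 <= g -> vle a (vadd a (Some g)).
Proof. by case: a => //= x g0; rewrite -{1}[x]addr0; apply: lerD2l. Qed.

Lemma vsplit_depth (a b : option G) (eps : G) :
  vle (Some 0) (vadd (vadd a b) (Some (eps + eps))) ->
  exists s1 s2 : G, [/\ s1 + s2 + eps = 0, vle (Some (s1 + s1)) a & vle (Some (s2 + s2)) b].
Proof.
have finite_case a' b' : 0 <= a' + b' + eps + eps -> exists s1 s2 : G,
    [/\ s1 + s2 + eps = 0, vle (Some (s1 + s1)) (Some a') & vle (Some (s2 + s2)) (Some b')].
  by move=> /split_depth[s1 [s2 [? ? ?]]]; exists s1, s2.
have infinite_left b' : exists s1 s2 : G, [/\ s1 + s2 + eps = 0, vle (Some (s1 + s1)) None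
    & vle (Some (s2 + s2)) (Some b')].
  have [s1 [s2 [? _ ?]]] := finite_case (- (b' + eps + eps)) b'
    ltac:(by rewrite -!addrA addNr).
  by exists s1, s2.
case: a b => [a|] [b|]; rewrite /= ?addrA; first exact: finite_case.
- by have [s1 [s2 [? ? ?]]] := infinite_left a; exists s2, s1; rewrite [s2 + s1]addrC.
- by move=> _; apply: infinite_left.
by move=> _; have [s1 [s2 [? ? ?]]] := infinite_left 0; exists s1, s2.
Qed.

Definition vminseq (l : seq (option G)) := foldr (@vmin G) None l.

Lemma vle_vminseq (c : option G) l : vle c (vminseq l) = all (vle c) l.
Proof.
elim: l => [|a l IH] /=; first by rewrite vleNone.
apply/idP/andP => [h|[ca]]; last by rewrite -IH; apply: vle_min.
by rewrite -IH; split; apply: vle_trans h _; [exact: vminl | exact: vminr].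
Qed.

Lemma vminseq_le l a : a \in l -> vle (vminseq l) a.
Proof. by move=> al; have := vle_refl (vminseq l); rewrite vle_vminseq => /allP; apply. Qed.

Lemma vminseq_mem l : vminseq l \in None :: l.
Proof.
elim: l => [|a l IH] /=; first by rewrite inE.
rewrite /vmin; case: ifP => _; first by rewrite !inE eqxx orbT.
by move: IH; rewrite !inE => /orP[->|->]; rewrite ?orbT.
Qed.

Lemma vminseq_addl d l : vminseq [seq vadd d a | a <- l] = vadd d (vminseq l).
Proof. by elim: l => [|a l IH] /=; rewrite ?vaddNone // IH ![vadd d _]vaddC vadd_minl. Qed.

Section Valuation.
Variables (F : fieldType) (v : F -> option G).
Hypothesis v_valuation : valuation v.

Lemma v0 : v 0 = None.
Proof. by case: v_valuation => -> _ _. Qed.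

Lemma v_eqNone x : v x = None -> x = 0.
Proof. by case: v_valuation => vx _ _ /vx. Qed.

Lemma vM x y : v (x * y) = vadd (v x) (v y).
Proof. by case: v_valuation. Qed.

Lemma vD x y : vle (vmin (v x) (v y)) (v (x + y)).
Proof. by case: v_valuation. Qed.

Lemma v_neq0 x : x != 0 -> exists g, v x = Some g.
Proof.
case vx: (v x) => [g|]; first by exists g.
by rewrite (v_eqNone vx) eqxx.
Qed.

Lemma v_Some_neq0 x g : v x = Some g -> x != 0.
Proof. by move=> vx; apply/eqP => x0; move: vx; rewrite x0 v0. Qed.

Lemma v1 : v 1 = Some 0.
Proof.
have [g vg] := v_neq0 (oner_neq0 F).
have := vM 1 1; rewrite mulr1 vg => -[gg].
by congr Some; apply: (@addrI _ g); rewrite addr0 -gg.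
Qed.

Lemma vV x g : v x = Some g -> v x^-1 = Some (- g).
Proof.
move=> vx; have [k vk] := v_neq0 (invr_neq0 (v_Some_neq0 vx)).
have := vM x x^-1; rewrite mulfV ?(v_Some_neq0 vx) // v1 vx vk => -[gk].
by congr Some; apply: (@addrI _ g); rewrite -gk subrr.
Qed.

Lemma v_sum (I : Type) (r : seq I) (f : I -> F) :
  vle (vminseq [seq v (f i) | i <- r]) (v (\sum_(i <- r) f i)).
Proof.
elim: r => [|i r IH]; first by rewrite big_nil v0.
by rewrite big_cons; apply: vle_trans _ (vD _ _); apply: vmin_le2 (vle_refl _) IH.
Qed.

Lemma v2_ge0 : vle (Some 0) (v 2%:R).
Proof. by apply: vle_trans _ (vD 1 1); rewrite v1 /vmin /= lexx. Qed.

End Valuation.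

Section QuadraticForm.
Variables (F : fieldType) (V : vectType F) (q : V -> F).
Hypothesis q_quadratic : quadratic_form q.

Lemma qZ a x : q (a *: x) = a ^+ 2 * q x.
Proof. by case: q_quadratic. Qed.

Lemma polarDl x y z : polar q (x + y) z = polar q x z + polar q y z.
Proof. by case: q_quadratic. Qed.

Lemma polarZl a x y : polar q (a *: x) y = a * polar q x y.
Proof. by case: q_quadratic. Qed.

Lemma polarC x y : polar q x y = polar q y x.
Proof. by rewrite /polar [y + x]addrC; ring.
Qed.

Lemma polarDr x y z : polar q z (x + y) = polar q z x + polar q z y.
Proof. by rewrite !(polarC z) polarDl. Qed.

Lemma polarZr a x y : polar q y (a *: x) = a * polar q y x.
Proof. by rewrite !(polarC y) polarZl. Qed.

Lemma polar0l y : polar q 0 y = 0.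
Proof. by rewrite -(scale0r 0) polarZl mul0r. Qed.

Lemma polar0r y : polar q y 0 = 0.
Proof. by rewrite polarC polar0l. Qed.

Lemma polarBl x y z : polar q (x - y) z = polar q x z - polar q y z.
Proof. by rewrite polarDl -scaleN1r polarZl mulN1r. Qed.

Lemma polar_suml (I : Type) (r : seq I) (f : I -> V) y :
  polar q (\sum_(i <- r) f i) y = \sum_(i <- r) polar q (f i) y.
Proof.
elim: r => [|i r IH]; first by rewrite !big_nil polar0l.
by rewrite !big_cons polarDl IH.
Qed.

Lemma polar_sumr (I : Type) (r : seq I) (f : I -> V) y :
  polar q y (\sum_(i <- r) f i) = \sum_(i <- r) polar q y (f i).
Proof. by rewrite polarC polar_suml; apply: eq_bigr => i _; rewrite polarC. Qed.

Lemma q0 : q 0 = 0.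
Proof. by rewrite -(scale0r 0) qZ expr0n mul0r. Qed.

Lemma qD x y : q (x + y) = q x + q y + polar q x y.
Proof. by rewrite /polar; ring. Qed.

Lemma polarxx x : polar q x x = 2%:R * q x.
Proof. by rewrite /polar -mulr2n -scaler_nat qZ; ring. Qed.

End QuadraticForm.

Section DiagonalNorm.
Variables (F : fieldType) (v : F -> option G) (V : vectType F) (q : V -> F).

Definition norming_weights (e : seq V) (s : V -> G) (eps : G) : Prop :=
  [/\ forall x y, x \in e -> y \in e -> vle (Some (s x + s y + eps)) (v (polar q x y)),
      forall x, x \in e -> vle (Some (s x + s x)) (v (q x)) &
      forall x, x \in e -> exists2 y, y \in e &
        v (polar q x y) = Some (s x + s y + eps) /\
        forall z, z \in e -> z != x -> polar q z y = 0].

Variables (e : seq V) (s : V -> G).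

Definition weight_min (r : seq (F * V)) : option G :=
  vminseq [seq vadd (v p.1) (Some (s p.2)) | p <- r].

Definition diag_coords (x : V) : seq (F * V) :=
  [seq (coord (in_tuple e) i x, e`_i) | i <- enum 'I_(size e)].

Definition diag_norm (x : V) : option G := weight_min (diag_coords x).

Hypotheses (v_valuation : valuation v) (q_quadratic : quadratic_form q).
Variable eps : G.
Hypotheses (e_basis : basis_of fullv e) (eps_ge0 : 0 <= eps).
Hypothesis s_norming : norming_weights e s eps.

Lemma weight_min_le r p : p \in r -> vle (weight_min r) (vadd (v p.1) (Some (s p.2))).
Proof. by move=> pr; apply/vminseq_le/map_f. Qed.

Lemma v_polar_combination r1 r2 : {subset unzip2 r1 <= e} -> {subset unzip2 r2 <= e} ->
  vle (vadd (vadd (weight_min r1) (weight_min r2)) (Some eps))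
      (v (polar q (\sum_(p <- r1) p.1 *: p.2) (\sum_(p <- r2) p.1 *: p.2))).
Proof.
case: s_norming => polar_ge _ _ r1e r2e.
rewrite polar_suml //; apply: vle_trans _ (v_sum v_valuation _ _).
rewrite vle_vminseq; apply/allP => _ /mapP[p pr1 ->].
rewrite polar_sumr //; apply: vle_trans _ (v_sum v_valuation _ _).
rewrite vle_vminseq; apply/allP => _ /mapP[p' pr2 ->].
rewrite polarZl // polarZr // !(vM v_valuation).
apply: vle_trans (vle_add2r _ (vle_add2 (weight_min_le pr1) (weight_min_le pr2))) _.
rewrite vaddACA -vaddA [vadd (v p.1) (vadd _ _)]vaddA.
apply: vle_add2 (vle_refl _) (polar_ge _ _ _ _).
  by apply: r1e; apply: map_f.
by apply: r2e; apply: map_f.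
Qed.

Lemma v_q_combination r : {subset unzip2 r <= e} ->
  vle (vadd (weight_min r) (weight_min r)) (v (q (\sum_(p <- r) p.1 *: p.2))).
Proof.
case: s_norming => _ q_ge _; elim: r => [|p r IH] pre.
  by rewrite big_nil q0 // v0.
have pe : p.2 \in e by apply: pre; rewrite inE eqxx.
have re : {subset unzip2 r <= e} by move=> x xr; apply: pre; rewrite inE xr orbT.
have min_p : vle (weight_min (p :: r)) (vadd (v p.1) (Some (s p.2))) by exact: vminl.
have min_r : vle (weight_min (p :: r)) (weight_min r) by exact: vminr.
rewrite big_cons qD; apply: vle_trans _ (vD v_valuation _ _); apply: vle_min.
  apply: vle_trans _ (vD v_valuation _ _); apply: vle_min; last first.
    exact: vle_trans (vle_add2 min_r min_r) (IH re).
  rewrite qZ // expr2 !(vM v_valuation); apply: vle_trans (vle_add2 min_p min_p) _.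
  by rewrite vaddACA; apply: vle_add2 (vle_refl _) (q_ge _ pe).
have pe1 : {subset unzip2 [:: p] <= e} by move=> x; rewrite inE => /eqP ->.
have := v_polar_combination pe1 re; rewrite big_seq1.
have -> : weight_min [:: p] = vadd (v p.1) (Some (s p.2)) by rewrite /weight_min /= /vmin vleNone.
by apply: vle_trans; apply: vle_trans (vle_addr _ eps_ge0); apply: vle_add2.
Qed.

Let e_free : free e := basis_free e_basis.

Lemma diag_coords_sum x : \sum_(p <- diag_coords x) p.1 *: p.2 = x.
Proof.
by rewrite big_map big_enum /= [RHS](coord_basis (X := in_tuple e) e_basis (memvf x)).
Qed.

Lemma diag_coords_sub x : {subset unzip2 (diag_coords x) <= e}.
Proof. by move=> _ /mapP[_ /mapP[i _ ->] ->]; apply: mem_nth. Qed.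

Lemma diag_norm_sum (l : 'I_(size e) -> F) :
  diag_norm (\sum_i l i *: e`_i)
  = vminseq [seq vadd (v (l i)) (Some (s e`_i)) | i <- enum 'I_(size e)].
Proof.
rewrite /diag_norm /weight_min -map_comp; congr vminseq; apply: eq_map => i /=.
by rewrite (coord_sum_free (X := in_tuple e)).
Qed.

Lemma diag_norm_basis (j : 'I_(size e)) : diag_norm e`_j = Some (s e`_j).
Proof.
apply: vle_anti.
  apply: vle_trans (weight_min_le (map_f _ (mem_enum _ j))) _.
  by rewrite /= coord_free // eqxx v1 //= add0r lexx.
rewrite vle_vminseq; apply/allP => _ /mapP[_ /mapP[i _ ->] ->] /=.
rewrite (coord_free (X := in_tuple e)) //; case: eqP => [->|_]; last by rewrite v0.
by rewrite v1 //= add0r lexx.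
Qed.

Lemma diag_norm_eqNone x : diag_norm x = None <-> x = 0.
Proof.
split=> [x_inf|->].
  rewrite -(diag_coords_sum x) big1_seq // => p /andP[_ px].
  have := weight_min_le px; rewrite -/(diag_norm x) x_inf => /vNone_le.
  by case vp: (v p.1) => //= _; rewrite (v_eqNone v_valuation vp) scale0r.
apply: vNone_le; rewrite vle_vminseq; apply/allP => _ /mapP[_ /mapP[i _ ->] ->].
by rewrite /= linear0 v0.
Qed.

Lemma diag_normZ l x : diag_norm (l *: x) = vadd (v l) (diag_norm x).
Proof.
rewrite /diag_norm /weight_min -vminseq_addl -!map_comp; congr vminseq.
by apply: eq_map => i /=; rewrite linearZ /= vM // vaddA.
Qed.

Lemma diag_normD x y : vle (vmin (diag_norm x) (diag_norm y)) (diag_norm (x + y)).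
Proof.
rewrite vle_vminseq; apply/allP => _ /mapP[_ /mapP[i ii ->] ->].
have ix r := weight_min_le (map_f (fun i => (coord (in_tuple e) i r, e`_i)) ii).
apply: vle_trans (vmin_le2 (ix x) (ix y)) _.
by rewrite /= -vadd_minl; apply: vle_add2r; rewrite linearD; apply: vD.
Qed.

Lemma diag_norm_vnorm : vnorm v diag_norm.
Proof.
split; [exact: diag_norm_eqNone | exact: diag_normZ | exact: diag_normD |].
exists e; split=> // l; rewrite diag_norm_sum; congr foldr; apply: eq_map => i.
by rewrite diag_normZ diag_norm_basis.
Qed.

Lemma polar_diag_coords x (i : 'I_(size e)) y :
  (forall z, z \in e -> z != e`_i -> polar q z y = 0) ->
  polar q x y = coord (in_tuple e) i x * polar q e`_i y.
Proof.
move=> orth_y; rewrite -{1}(diag_coords_sum x) polar_suml // big_map.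
rewrite (bigD1_seq i) ?mem_enum ?enum_uniq //= big1_seq ?addr0 ?polarZl // => k /andP[ki _].
rewrite polarZl // orth_y ?mulr0 ?mem_nth //.
by rewrite nth_uniq ?free_uniq.
Qed.

Lemma diag_norm_compatible : compatible v q diag_norm eps.
Proof.
split=> [x y|x|x x_neq0].
- have := v_polar_combination (@diag_coords_sub x) (@diag_coords_sub y).
  by rewrite !diag_coords_sum.
- by have := v_q_combination (@diag_coords_sub x); rewrite diag_coords_sum.
have := vminseq_mem [seq vadd (v p.1) (Some (s p.2)) | p <- diag_coords x].
rewrite in_cons -/(weight_min _) -/(diag_norm x) => /predU1P[/diag_norm_eqNone x0|].
  by move/eqP: x_neq0.
case/mapP=> _ /mapP[i _ ->] -> /=.
case: s_norming => _ _ /(_ e`_i (mem_nth _ (ltn_ord i)))[y ye [vxy orth_y]].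
exists y; split; first exact: basis_not0 e_basis ye.
rewrite (polar_diag_coords x orth_y) vM // vxy.
have [j yj] : exists j : 'I_(size e), y = e`_j.
  by exists (Ordinal (etrans (index_mem y e) ye)); rewrite nth_index.
rewrite [in diag_norm y]yj diag_norm_basis -yj.
by case: (v _) => //= c; rewrite !addrA.
Qed.

End DiagonalNorm.

Section NormingBasis.
Variables (F : fieldType) (v : F -> option G) (V : vectType F) (q : V -> F).
Hypotheses (v_valuation : valuation v) (q_quadratic : quadratic_form q).

Definition admissible_depth (eps0 : G) : Prop :=
  [/\ in_half_value_group v eps0, 0 <= eps0 & vle (Some eps0) (v 2%:R)].

Definition norming_basis (e : seq V) : Prop :=
  exists2 eps0, admissible_depth eps0 &
    forall eps, eps0 <= eps -> exists s, norming_weights v q e s eps.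

Lemma admissible_depth0 : admissible_depth 0.
Proof.
split; [|exact: lexx|exact: v2_ge0].
by exists 1; rewrite oner_neq0 v1 // addr0.
Qed.

Lemma norming_weights_cat e1 e2 s1 s2 eps : uniq (e1 ++ e2) ->
  (forall x y, x \in e1 -> y \in e2 -> polar q x y = 0) ->
  norming_weights v q e1 s1 eps -> norming_weights v q e2 s2 eps ->
  norming_weights v q (e1 ++ e2) (fun x => if x \in e1 then s1 x else s2 x) eps.
Proof.
rewrite cat_uniq => /and3P[_ disj _] orth [polar1 q1 partner1] [polar2 q2 partner2].
have e2_e1 x : x \in e2 -> x \in e1 = false.
  by move=> xe2; apply: contraNF disj => xe1; apply/hasP; exists x.
have orthC x y : x \in e2 -> y \in e1 -> polar q x y = 0.
  by move=> ? ?; rewrite polarC // orth.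
split=> [x y|x|x]; rewrite !mem_cat.
- case/orP=> xe /orP[] ye; first by rewrite xe ye; apply: polar1.
  + by rewrite orth ?v0.
  + by rewrite orthC ?v0.
  by rewrite !e2_e1 //; apply: polar2.
- by case/orP=> xe; [rewrite xe; apply: q1 | rewrite e2_e1 //; apply: q2].
case/orP=> xe.
  have [y ye [vxy orth_y]] := partner1 x xe.
  exists y; first by rewrite mem_cat ye.
  rewrite xe ye; split=> // z; rewrite mem_cat => /orP[ze|ze]; first exact: orth_y.
  by rewrite orthC.
have [y ye [vxy orth_y]] := partner2 x xe.
exists y; first by rewrite mem_cat ye orbT.
rewrite !e2_e1 //; split=> // z; rewrite mem_cat => /orP[ze _|]; last exact: orth_y.
exact: orth.
Qed.

Lemma norming_basis_cat e1 e2 : uniq (e1 ++ e2) ->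
  (forall x y, x \in e1 -> y \in e2 -> polar q x y = 0) ->
  norming_basis e1 -> norming_basis e2 -> norming_basis (e1 ++ e2).
Proof.
move=> e_uniq orth [a a_adm a_ok] [b b_adm b_ok].
have [m [am bm m_adm]] : exists m, [/\ a <= m, b <= m & admissible_depth m].
  by case/orP: (le_total a b) => ab; [exists b | exists a]; rewrite ?lexx.
exists m => // eps m_eps.
have [s1 s1_ok] := a_ok eps (le_trans am m_eps).
have [s2 s2_ok] := b_ok eps (le_trans bm m_eps).
by eexists; apply: norming_weights_cat s1_ok s2_ok.
Qed.

Lemma norming_basis_nil : norming_basis [::].
Proof. by exists 0 => [|eps _]; [exact: admissible_depth0 | exists (fun=> 0)]. Qed.

(* The weight h with 2h + eps = v(b(z, z)) also satisfies 2h <= v(q(z))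
   exactly when eps >= v(2). *)
Lemma norming_basis_anisotropic z : polar q z z != 0 -> norming_basis [:: z].
Proof.
move=> bzz_neq0; have bzz := polarxx q_quadratic z.
have two_neq0 : 2%:R != 0 :> F by apply: contraNneq bzz_neq0; rewrite bzz => ->; rewrite mul0r.
have qz_neq0 : q z != 0 by apply: contraNneq bzz_neq0; rewrite bzz => ->; rewrite mulr0.
have [t vt] := v_neq0 v_valuation two_neq0.
have [g vg] := v_neq0 v_valuation qz_neq0.
exists t => [|eps t_eps].
  split; [|by have := v2_ge0 v_valuation; rewrite vt | by rewrite vt /= lexx].
  by exists (2%:R * 2%:R); rewrite mulf_neq0 // vM // vt.
have [h hh] := halve (t + g - eps); exists (fun=> h).
have mem_z w : w \in [:: z] -> w = z by rewrite inE => /eqP.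
split=> [x y /mem_z -> /mem_z ->|x /mem_z ->|x /mem_z ->].
- by rewrite bzz vM // vt vg hh subrK /= lexx.
- by rewrite hh vg /= -(lerD2rE _ _ eps) subrK addrC lerD2l.
exists z; first exact: mem_head.
by rewrite bzz vM // vt vg hh subrK; split=> // w /mem_z ->; rewrite eqxx.
Qed.

Lemma plane_depth (a b : F) : (2%:R != 0 :> F -> a = 0) ->
  exists2 eps0, admissible_depth eps0 &
    forall eps, eps0 <= eps -> vle (Some 0) (vadd (vadd (v a) (v b)) (Some (eps + eps))).
Proof.
move=> char2_a.
case va: (v a) => [al|]; last by exists 0; first exact: admissible_depth0.
case vb: (v b) => [be|]; last by exists 0; first exact: admissible_depth0.
case/orP: (le_total 0 (al + be)) => [ab_ge0 | ab_le0].
  exists 0 => [|eps eps_ge0]; first exact: admissible_depth0.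
  by rewrite /= -(addr0 0); apply: lerD2 ab_ge0 _; rewrite -(addr0 0); apply: lerD2.
have [k kk] := halve (- (al + be)); exists k => [|eps k_eps].
  split.
  - exists (a * b)^-1.
    rewrite invr_eq0 mulf_neq0 ?(v_Some_neq0 v_valuation va) ?(v_Some_neq0 v_valuation vb) //.
    by split=> //; rewrite kk; apply: (vV v_valuation); rewrite vM // va vb.
  - by apply: double_ge0; rewrite kk -(subrr (al + be)) -[X in _ <= X]add0r lerD2rE.
  have [-> | two_neq0] := eqVneq (2%:R : F) 0; first by rewrite v0.
  by move: va; rewrite char2_a // v0.
rewrite /= -(subrr (al + be)) -kk; apply: lerD2l.
by apply: lerD2.
Qed.

Lemma norming_basis_plane x y :
  polar q x y = 1 -> polar q x x = 0 -> polar q y y = 0 -> norming_basis [:: x; y].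
Proof.
move=> bxy bxx byy; have byx : polar q y x = 1 by rewrite polarC.
have char2_qx : 2%:R != 0 :> F -> q x = 0.
  move=> two_neq0; apply/eqP; move: bxx; rewrite polarxx // => /eqP.
  by rewrite mulf_eq0 (negbTE two_neq0).
have [eps0 eps0_adm eps0_ok] := plane_depth (q y) char2_qx.
exists eps0 => // eps /eps0_ok /vsplit_depth[s1 [s2 [s12 s1_ok s2_ok]]].
have y_neq_x : (y == x) = false.
  by apply/eqP => yx; move: bxy; rewrite yx bxx => /eqP; rewrite eq_sym oner_eq0.
have s21 : s2 + s1 + eps = 0 by rewrite [s2 + s1]addrC.
exists (fun w => if w == x then s1 else s2).
have mem_xy w : w \in [:: x; y] -> w = x \/ w = y by rewrite !inE => /orP[] /eqP; [left | right].
split=> [u w /mem_xy[]-> /mem_xy[]->|u /mem_xy[]->|u /mem_xy[]->];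
  rewrite ?eqxx ?y_neq_x ?bxx ?byy ?bxy ?byx ?v0 ?v1 ?s12 ?s21 ?vle_refl //.
- exists y; first by rewrite !inE eqxx orbT.
  rewrite y_neq_x bxy v1 // s12; split=> // w /mem_xy[]->; rewrite ?eqxx // byy.
exists x; first exact: mem_head.
rewrite eqxx byx v1 // s21; split=> // w /mem_xy[]->; rewrite ?eqxx // bxx.
Qed.

End NormingBasis.

Section Decomposition.
Variables (F : fieldType) (v : F -> option G) (V : vectType F) (q : V -> F).
Hypotheses (v_valuation : valuation v) (q_quadratic : quadratic_form q).

Definition nondegenerate_on (U : {vspace V}) : Prop :=
  forall x, x \in U -> (forall y, y \in U -> polar q x y = 0) -> x = 0.

Definition has_norming_basis (U : {vspace V}) : Prop :=
  exists2 e, basis_of U e & norming_basis v q e.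

Lemma has_norming_basis0 : has_norming_basis 0%VS.
Proof. by exists [::]; [exact: nil_basis | exact: norming_basis_nil]. Qed.

Lemma polar_span_eq0 x (Y : seq V) : (forall y, y \in Y -> polar q x y = 0) ->
  forall w, w \in <<Y>>%VS -> polar q x w = 0.
Proof.
move=> xY w /(coord_span (X := in_tuple Y)) ->.
rewrite polar_sumr // big1 // => i _; rewrite polarZr // xY ?mulr0 //.
exact: mem_nth.
Qed.

(* The complement is the image of [U] under the projection [pi] onto the orthogonal
   of [B] along [<<B>>]. *)
Lemma orthogonal_complement (U : {vspace V}) (B : seq V) (pi : V -> V) :
  nondegenerate_on U -> {subset B <= U} -> free B -> B != [::] ->
  (forall u, u - pi u \in <<B>>%VS) -> (forall u x, x \in B -> polar q (pi u) x = 0) ->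
  (forall w, w \in <<B>>%VS -> (forall x, x \in B -> polar q w x = 0) -> w = 0) ->
  exists W : {vspace V}, [/\ (<<B>> + W)%VS = U, directv (<<B>> + W),
    (\dim W < \dim U)%N, nondegenerate_on W & forall w x, w \in W -> x \in B -> polar q w x = 0].
Proof.
move=> U_nondeg BU B_free B_neq0 pi_B pi_orth B_nondeg.
pose W := (<<map pi (vbasis U)>>)%VS.
have BU_sub : (<<B>> <= U)%VS by apply/span_subvP.
have WU : (W <= U)%VS.
  apply/span_subvP => _ /mapP[u /(basis_mem (vbasisP U)) uU ->].
  by rewrite -[pi u](subKr u) rpredB // (subvP BU_sub).
have W_orth w x : w \in W -> x \in B -> polar q w x = 0.
  move=> wW xB; rewrite polarC //; apply: polar_span_eq0 wW => _ /mapP[u _ ->].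
  by rewrite polarC // pi_orth.
have BW0 : (<<B>> :&: W = 0)%VS.
  apply/eqP; rewrite -subv0; apply/subvP => w; rewrite memv_cap memv0 => /andP[wB wW].
  by apply/eqP/B_nondeg => // x; apply: W_orth.
have BWU : (<<B>> + W)%VS = U.
  apply/eqP; rewrite eqEsubv subv_add BU_sub WU /= -{1}(span_basis (vbasisP U)).
  apply/span_subvP => u ub; rewrite -(subrK (pi u) u).
  by apply: memv_add; [exact: pi_B | apply/memv_span/map_f].
exists W; split=> //; first exact/directv_addP.
  have xB : head 0 B \in B by case: (B) B_neq0 => // x B' _; apply: mem_head.
  rewrite (ltn_leqif (dimv_leqif_eq WU)); apply/negP => /eqP W_eq_U.
  have : head 0 B \in (<<B>> :&: W)%VS by rewrite memv_cap memv_span // W_eq_U BU.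
  by rewrite BW0 memv0; apply/negP; apply: free_not0 B_free xB.
move=> w wW w_orth; apply: U_nondeg; first exact: (subvP WU).
move=> u; rewrite -BWU => /memv_addP[b bB [w' w'W ->]].
rewrite polarDr // (w_orth w' w'W) addr0; apply: polar_span_eq0 bB => x xB.
exact: W_orth.
Qed.

Lemma norming_basis_split (U W : {vspace V}) (B : seq V) :
  (<<B>> + W)%VS = U -> directv (<<B>> + W) -> free B ->
  (forall w x, w \in W -> x \in B -> polar q w x = 0) ->
  norming_basis v q B -> has_norming_basis W -> has_norming_basis U.
Proof.
move=> BWU BW_direct B_free W_orth B_norming [e e_basis e_norming].
have Be_basis : basis_of U (B ++ e) by rewrite -BWU cat_basis // /basis_of eqxx.
exists (B ++ e) => //; apply: norming_basis_cat => //.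
  exact/free_uniq/(basis_free Be_basis).
by move=> x y xB ye; rewrite polarC // W_orth // (basis_mem e_basis).
Qed.

Section Step.
Variable U : {vspace V}.
Hypothesis U_nondeg : nondegenerate_on U.
Hypothesis IH : forall W : {vspace V}, (\dim W < \dim U)%N -> nondegenerate_on W ->
  has_norming_basis W.

Lemma has_norming_basis_line z : z \in U -> polar q z z != 0 -> has_norming_basis U.
Proof.
move=> zU bzz_neq0; pose pi u := u - (polar q u z / polar q z z) *: z.
have mem_z w : w \in [:: z] -> w = z by rewrite inE => /eqP.
have zU' : {subset [:: z] <= U} by move=> w /mem_z ->.
have z_free : free [:: z].
  by rewrite seq1_free; apply: contraNneq bzz_neq0 => ->; rewrite polar0l.
have pi_B u : u - pi u \in <<[:: z]>>%VS.
  by rewrite /pi opprB addrC subrK rpredZ // memv_span1.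
have pi_orth u w : w \in [:: z] -> polar q (pi u) w = 0.
  by move=> /mem_z ->; rewrite polarBl // polarZl // divfK // subrr.
have z_nondeg w : w \in <<[:: z]>>%VS -> (forall x, x \in [:: z] -> polar q w x = 0) -> w = 0.
  rewrite span_seq1 => /vlineP[k ->] /(_ z (mem_head _ _)) /eqP.
  by rewrite polarZl // mulf_eq0 (negbTE bzz_neq0) orbF => /eqP ->; rewrite scale0r.
have [W [BWU BW W_lt W_nondeg W_orth]] :=
  orthogonal_complement U_nondeg zU' z_free isT pi_B pi_orth z_nondeg.
apply: norming_basis_split BWU BW z_free W_orth _ (IH W_lt W_nondeg).
exact: norming_basis_anisotropic.
Qed.

Lemma has_norming_basis_plane x y : x \in U -> y \in U ->
  polar q x y = 1 -> polar q x x = 0 -> polar q y y = 0 -> has_norming_basis U.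
Proof.
move=> xU yU bxy bxx byy; have byx : polar q y x = 1 by rewrite polarC.
pose pi u := u - polar q u y *: x - polar q u x *: y.
have mem_xy w : w \in [:: x; y] -> w = x \/ w = y by rewrite !inE => /orP[] /eqP; [left | right].
have xy_free : free [:: x; y].
  rewrite free_cons seq1_free span_seq1; apply/andP; split.
    apply/negP => /vlineP[k xk]; move: bxy; rewrite xk polarZl // byy mulr0 => /eqP.
    by rewrite eq_sym oner_eq0.
  by apply: contra_eq_neq bxy => ->; rewrite polar0r // eq_sym oner_neq0.
have xyU : {subset [:: x; y] <= U} by move=> w /mem_xy[]->.
have x_xy : x \in [:: x; y] := mem_head _ _.
have y_xy : y \in [:: x; y] by rewrite !inE eqxx orbT.
have pi_B u : u - pi u \in <<[:: x; y]>>%VS.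
  rewrite /pi -addrA -opprD subKr.
  by rewrite rpredD // rpredZ // memv_span.
have pi_orth u w : w \in [:: x; y] -> polar q (pi u) w = 0.
  by move=> /mem_xy[]->;
    rewrite !polarBl // !polarZl // ?bxx ?byy ?bxy ?byx mulr0 mulr1 ?subr0 ?subrr.
have xy_nondeg w : w \in <<[:: x; y]>>%VS ->
    (forall u, u \in [:: x; y] -> polar q w u = 0) -> w = 0.
  rewrite span_cons span_seq1 => /memv_addP[_ /vlineP[a ->] [_ /vlineP[b ->] ->]] w_orth.
  move: (w_orth x x_xy) (w_orth y y_xy).
  rewrite !polarDl // !polarZl // bxx byx bxy byy !mulr0 !mulr1 add0r addr0 => -> ->.
  by rewrite !scale0r addr0.
have [W [BWU BW W_lt W_nondeg W_orth]] :=
  orthogonal_complement U_nondeg xyU xy_free isT pi_B pi_orth xy_nondeg.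
apply: norming_basis_split BWU BW xy_free W_orth _ (IH W_lt W_nondeg).
exact: norming_basis_plane.
Qed.

End Step.

Lemma nondegenerate_has_norming_basis n (U : {vspace V}) :
  (\dim U <= n)%N -> nondegenerate_on U -> has_norming_basis U.
Proof.
elim: n U => [|n IHn] U U_dim U_nondeg.
  by move: U_dim; rewrite leqn0 dimv_eq0 => /eqP ->; apply: has_norming_basis0.
have [-> | U_neq0] := eqVneq U 0%VS; first exact: has_norming_basis0.
have IH W : (\dim W < \dim U)%N -> nondegenerate_on W -> has_norming_basis W.
  by move=> W_lt; apply: IHn; rewrite -ltnS (leq_trans W_lt).
have [[z [zU bzz]] | all_iso] := classic (exists z, z \in U /\ polar q z z != 0).
  exact: (has_norming_basis_line U_nondeg IH zU bzz).
have iso z : z \in U -> polar q z z = 0.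
  by move=> zU; apply/eqP; apply: contra_notT all_iso => bzz; exists z.
pose x := vpick U; have xU : x \in U := memv_pick U.
have [[y [yU bxy]] | orth_x] := classic (exists y, y \in U /\ polar q x y != 0); last first.
  suff x0 : x = 0 by move: U_neq0; rewrite -vpick0 -/x x0 eqxx.
  by apply: U_nondeg => // y yU; apply/eqP; apply: contra_notT orth_x => bxy; exists y.
apply: (has_norming_basis_plane U_nondeg IH xU (rpredZ (polar q x y)^-1 yU) _ (iso x xU)).
  by rewrite polarZr // mulVf.
by rewrite iso // rpredZ.
Qed.

End Decomposition.

Section Hyperbolic.
Variables (F : fieldType) (v : F -> option G) (V : vectType F) (q : V -> F).
Hypotheses (v_valuation : valuation v) (q_quadratic : quadratic_form q).
Variables (n : nat) (e f : n.-tuple V).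
Hypothesis q_hyperbolic : forall a b : 'I_n -> F,
  q (\sum_(i < n) (a i *: tnth e i + b i *: tnth f i)) = \sum_(i < n) a i * b i.

Let comb (a b : 'I_n -> F) := \sum_(i < n) (a i *: tnth e i + b i *: tnth f i).
Let delta (k : 'I_n) (i : 'I_n) : F := (i == k)%:R.

Let polar_comb a b c d : polar q (comb a b) (comb c d) = \sum_i (a i * d i + c i * b i).
Proof.
rewrite /polar /comb -big_split /= q_hyperbolic.
under eq_bigr do rewrite addrACA -!scalerDl.
by rewrite q_hyperbolic !q_hyperbolic -!sumrB; apply: eq_bigr => i _; ring.
Qed.

Let e_comb k : tnth e k = comb (delta k) (fun=> 0).
Proof.
rewrite /comb (bigD1 k) //= big1 => [|i /negbTE ik]; last by rewrite /delta ik !scale0r addr0.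
by rewrite /delta eqxx scale1r scale0r !addr0.
Qed.

Let f_comb k : tnth f k = comb (fun=> 0) (delta k).
Proof.
rewrite /comb (bigD1 k) //= big1 => [|i /negbTE ik]; last by rewrite /delta ik !scale0r addr0.
by rewrite /delta eqxx scale1r scale0r add0r addr0.
Qed.

Let sum_delta i j : \sum_k delta i k * delta j k = (i == j)%:R.
Proof.
rewrite (bigD1 i) //= big1 => [|k /negbTE ki]; last by rewrite /delta ki mul0r.
by rewrite /delta eqxx mul1r addr0 eq_sym.
Qed.

Lemma hyperbolic_polar_ee i j : polar q (tnth e i) (tnth e j) = 0.
Proof. by rewrite !e_comb polar_comb big1 // => k _; rewrite !mulr0 addr0. Qed.

Lemma hyperbolic_polar_ff i j : polar q (tnth f i) (tnth f j) = 0.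
Proof. by rewrite !f_comb polar_comb big1 // => k _; rewrite !mul0r addr0. Qed.

Lemma hyperbolic_polar_ef i j : polar q (tnth e i) (tnth f j) = (i == j)%:R.
Proof.
by rewrite e_comb f_comb polar_comb -sum_delta; apply: eq_bigr => k _; rewrite mulr0 addr0.
Qed.

Lemma hyperbolic_q_e i : q (tnth e i) = 0.
Proof. by rewrite e_comb q_hyperbolic big1 // => k _; rewrite mulr0. Qed.

Lemma hyperbolic_q_f i : q (tnth f i) = 0.
Proof. by rewrite f_comb q_hyperbolic big1 // => k _; rewrite mul0r. Qed.

Lemma hyperbolic_norming_weights : norming_weights v q (e ++ f) (fun=> 0) 0.
Proof.
have v_nat (b : bool) : vle (Some 0) (v b%:R) by case: b; rewrite ?v1 ?v0 //= lexx.
have mem_ef u : u \in e ++ f -> (exists i, u = tnth e i) \/ (exists i, u = tnth f i).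
  by rewrite mem_cat => /orP[] /tnthP[i ->]; [left | right]; exists i.
have e_ef i : tnth e i \in e ++ f by rewrite mem_cat mem_tnth.
have f_ef i : tnth f i \in e ++ f by rewrite mem_cat mem_tnth orbT.
rewrite /norming_weights !addr0; split.
- move=> u w /mem_ef[][i ->] /mem_ef[][j ->].
  + by rewrite hyperbolic_polar_ee // v0.
  + by rewrite hyperbolic_polar_ef; apply: v_nat.
  + by rewrite polarC // hyperbolic_polar_ef; apply: v_nat.
  by rewrite hyperbolic_polar_ff // v0.
- by move=> u /mem_ef[][i ->]; rewrite ?hyperbolic_q_e ?hyperbolic_q_f // v0.
move=> u /mem_ef[][i ->].
  exists (tnth f i) => //; rewrite hyperbolic_polar_ef // eqxx v1 //.
  split=> // z /mem_ef[][k ->]; last by rewrite hyperbolic_polar_ff.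
  by rewrite hyperbolic_polar_ef //; case: (eqVneq k i) => [-> | //]; rewrite eqxx.
exists (tnth e i) => //; rewrite polarC // hyperbolic_polar_ef // eqxx v1 //.
split=> // z /mem_ef[][k ->]; first by rewrite hyperbolic_polar_ee.
by rewrite polarC // hyperbolic_polar_ef //; case: (eqVneq k i) => [-> | //]; rewrite eqxx.
Qed.

End Hyperbolic.

End OrderedGroup.

Theorem proposition4p3 (F : fieldType) (G : porderZmodType) (v : F -> option G) :
  divisible_ordered_group G -> valuation v ->
  (forall (V : vectType F) (q : V -> F),
     quadratic_form q -> nonsingular q ->
     exists (alpha : V -> option G) (eps : G),
       [/\ vnorm v alpha, compatible v q alpha eps,
           in_half_value_group v eps, 0 <= eps & vle (Some eps) (v 2%:R)])
  /\
  (forall (V : vectType F) (q : V -> F),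
     quadratic_form q -> hyperbolic q ->
     exists alpha : V -> option G, vnorm v alpha /\ compatible v q alpha 0).
Proof.
move=> [le_total lerD2r divisible] v_valuation; split.
  move=> V q q_quadratic q_nonsingular.
  have V_nondeg : nondegenerate_on q fullv.
    by move=> x _ x_orth; apply: q_nonsingular => y; apply: x_orth (memvf y).
  have [e e_basis [eps0 [eps0_half eps0_ge0 eps0_le2] eps0_ok]] :=
    nondegenerate_has_norming_basis le_total lerD2r divisible v_valuation q_quadratic
      (leqnn _) V_nondeg.
  have [s s_norming] := eps0_ok eps0 (lexx eps0).
  exists (diag_norm v e s), eps0; split=> //.
    exact: diag_norm_vnorm.
  exact: diag_norm_compatible.
move=> V q q_quadratic [n [e [f [ef_basis q_hyperbolic]]]].
exists (diag_norm v (e ++ f) (fun=> 0)); split; first exact: diag_norm_vnorm.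
apply: (diag_norm_compatible le_total lerD2r v_valuation q_quadratic ef_basis (lexx 0)).
exact: hyperbolic_norming_weights.
Qed.
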